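(* In a network satisfying (H1) and (H2), let $X$ be a species, $\ell\ge1$, and let $\prod_{i=1}^m z_i$, with $m\ge2$ and each $Z_i$ a non-intermediate species (not necessarily distinct), be a monomial appearing in $x^{(\ell)}$. Then there exist $1\le i_1<i_2\le m$ such that $Z_{i_1}$ reacts with $Z_{i_2}$.
   Context: Species are capital letters, concentrations lower-case letters. Mass-action system: $\dot{\mathbf{x}}=\sum_{y\to y'}k_{yy'}\mathbf{x}^y(y'-y)$ with rate constants $k_{yy'}>0$ (vector $\mathbf{k}$). Total derivative: $\dot\varphi=\sum_i\frac{\partial\varphi}{\partial x_i}\dot x_i$ with $\dot x_i$ replaced by the right-hand side; $\varphi^{(\ell)}$ its $\ell$-th iterate, a polynomial in concentrations with coefficients polynomial in $\mathbf{k}$; a monomial appears if its coefficient is a nonzero polynomial in $\mathbf{k}$. (H1) Every connected component has the form $Y+S_0\rightleftarrows U_1\to Y+S_1\rightleftarrows\cdots\rightleftarrows U_L\to Y+S_L$ (reactions $Y+S_{j-1}\to U_j$, $U_j\to Y+S_{j-1}$, $U_j\to Y+S_j$), unique enzyme $Y$; intermediates ($U_j$) distinct throughout the network; non-intermediates of a component pairwise distinct but may appear in other components; each complex in a unique component. $\mathscr{S}_U$ = substrates/products of the component of intermediate $U$. (H2) A partition $\mathscr{S}^{(0)}\sqcup\cdots\sqcup\mathscr{S}^{(M)}$ ($M\ge2$, nonempty, $\mathscr{S}^{(0)}$ the intermediates) with: for each intermediate $U$ with enzyme $Y$, some $\alpha\ge1$ has $\mathscr{S}_U\subseteq\mathscr{S}^{(\alpha)}$,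 $Y\notin\mathscr{S}^{(\alpha)}$. A non-intermediate $X_1$ reacts with a non-intermediate $X_2$ if there is a reaction $X_1+X_2\to U$ with $U$ intermediate. *)

From HB Require Import structures.
From mathcomp Require Import all_boot all_order all_algebra.
Set Implicit Arguments. Unset Strict Implicit. Unset Printing Implicit Defensive.
Import GRing.Theory.
Local Open Scope ring_scope.

Section CRN.
Variables (S R : finType).

Definition cplx := {ffun S -> nat}.
Definition cplx1 (U : S) : cplx := [ffun s => nat_of_bool (s == U)].
Definition cplx2 (Y Z : S) : cplx :=
  [ffun s => (nat_of_bool (s == Y) + nat_of_bool (s == Z))%N].

(* Formal polynomials over int in the variables x_s (s : S) and k_r (r : R),
   represented as formal sums (lists of terms coefficient * monomial). *)
Definition var := (S + R)%type.
Definition mon := {ffun var -> nat}.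
Definition fpoly := seq (int * mon).

Definition mon_add (a b : mon) : mon := [ffun v => (a v + b v)%N].
Definition padd (p q : fpoly) : fpoly := p ++ q.
Definition pmul (p q : fpoly) : fpoly :=
  [seq (t.1 * u.1, mon_add t.2 u.2) | t : int * mon <- p, u : int * mon <- q].
Definition pderiv (i : S) (p : fpoly) : fpoly :=
  [seq (t.1 * (t.2 (inl i : var))%:Z,
        [ffun v => if v == (inl i : var) then (t.2 v).-1 else t.2 v]) | t : int * mon <- p].
Definition pxvar (X : S) : fpoly := [:: (1, [ffun v => nat_of_bool (v == (inl X : var))])].

Variables (src tgt : R -> cplx).

(* mass-action right-hand side: x_i' = sum_r k_r x^{src r} (tgt r i - src r i) *)
Definition rhs (i : S) : fpoly :=
  [seq ((tgt r i)%:Z - (src r i)%:Z,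
        [ffun v : var => match v with inl s => src r s
                         | inr r' => nat_of_bool (r' == r) end]) | r <- enum R].

Definition tderiv (p : fpoly) : fpoly :=
  flatten [seq pmul (pderiv i p) (rhs i) | i <- enum S].

Definition coef (p : fpoly) (m : mon) : int := \sum_(t <- p | t.2 == m) t.1.

Definition join_mon (a : {ffun S -> nat}) (b : {ffun R -> nat}) : mon :=
  [ffun v => match v with inl s => a s | inr r => b r end].

(* the x-monomial x^a appears in p: its coefficient, a polynomial in k,
   is nonzero, i.e. some k-monomial has nonzero collected coefficient *)
Definition appears (p : fpoly) (a : {ffun S -> nat}) : Prop :=
  exists b : {ffun R -> nat}, coef p (join_mon a b) != 0.

Definition mset (zs : seq S) : {ffun S -> nat} := [ffun s => count_mem s zs].

(* Component data for (H1): component c is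
   Y c + Sb c 0 <-> U c 1 -> Y c + Sb c 1 <-> ... <-> U c (L c) -> Y c + Sb c (L c). *)
Variables (C : finType) (Y : C -> S) (L : C -> nat) (Sb U : C -> nat -> S).

Definition is_intermediate (s : S) : Prop :=
  exists c j, (1 <= j <= L c)%N /\ U c j = s.

Definition comp_reaction (c : C) (j : nat) (y y' : cplx) : Prop :=
  (y = cplx2 (Y c) (Sb c j.-1) /\ y' = cplx1 (U c j)) \/
  (y = cplx1 (U c j) /\ y' = cplx2 (Y c) (Sb c j.-1)) \/
  (y = cplx1 (U c j) /\ y' = cplx2 (Y c) (Sb c j)).

Definition H1 : Prop :=
  (* reactions form a set of pairs y -> y' *)
  (forall r r', src r = src r' -> tgt r = tgt r' -> r = r') /\
  (forall c, (1 <= L c)%N) /\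
  (forall r, exists c j, (1 <= j <= L c)%N /\ comp_reaction c j (src r) (tgt r)) /\
  (forall c j y y', (1 <= j <= L c)%N -> comp_reaction c j y y' ->
      exists r, src r = y /\ tgt r = y') /\
  (forall c c' j j', (1 <= j <= L c)%N -> (1 <= j' <= L c')%N ->
      U c j = U c' j' -> c = c' /\ j = j') /\
  (forall c j, (j <= L c)%N -> Y c <> Sb c j) /\
  (forall c j j', (j <= L c)%N -> (j' <= L c)%N -> Sb c j = Sb c j' -> j = j') /\
  (forall c, ~ is_intermediate (Y c)) /\
  (forall c j, (j <= L c)%N -> ~ is_intermediate (Sb c j)) /\
  (forall c c' j j', c <> c' -> (j <= L c)%N -> (j' <= L c')%N ->
      cplx2 (Y c) (Sb c j) <> cplx2 (Y c') (Sb c' j')).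

(* (H2): partition S^(0) |_| ... |_| S^(M), given by class function cls *)
Definition H2 : Prop :=
  exists (M : nat) (cls : S -> nat),
    (2 <= M)%N /\
    (forall s, (cls s <= M)%N) /\
    (forall a, (a <= M)%N -> exists s, cls s = a) /\
    (forall s, cls s = 0%N <-> is_intermediate s) /\
    (forall c j, (1 <= j <= L c)%N ->
       exists a, (1 <= a)%N /\ (forall j', (j' <= L c)%N -> cls (Sb c j') = a)
                 /\ cls (Y c) <> a).

Definition reacts (X1 X2 : S) : Prop :=
  exists r, src r = cplx2 X1 X2 /\
    exists V, is_intermediate V /\ tgt r = cplx1 V.

End CRN.

From HB Require Import structures.
From mathcomp Require Import all_boot all_order all_algebra.
Set Implicit Arguments. Unset Strict Implicit. Unset Printing Implicit Defensive.

(* Every term of a total derivative carries the factor x^y of the source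
   complex y of some reaction.  So a monomial of x^(l), l >= 1, made of
   non-intermediates is divisible by the source of a reaction that has no
   intermediate in its source; under (H1) that reaction is a binding
   Y + S_(j-1) -> U_j, whose two distinct reactants then occur among the z_i
   and react with each other. *)

Lemma coef_neq0_has (S R : finType) (p : fpoly S R) (m : mon S R) :
  coef p m != 0%R -> has (fun t => t.2 == m) p.
Proof. by apply: contraNT => /negbTE-hasN; rewrite /coef big_hasC ?hasN. Qed.

Lemma tderiv_term_ge_src (S R : finType) (src tgt : R -> cplx S)
    (p : fpoly S R) (t : int * mon S R) :
  t \in tderiv src tgt p -> exists r, forall s, (src r s <= t.2 (inl s))%N.
Proof.
move/flattenP=> [q /mapP [i _ ->]] /allpairsP [[a b] /= [_ /mapP [r _ ->] ->]].
by exists r => s; rewrite /mon_add /= !ffunE leq_addl.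
Qed.

Lemma appears_iter_tderiv_ge_src (S R : finType) (src tgt : R -> cplx S)
    (l : nat) (p : fpoly S R) (a : {ffun S -> nat}) :
  (1 <= l)%N -> appears (iter l (tderiv src tgt) p) a ->
  exists r, forall s, (src r s <= a s)%N.
Proof.
case: l => // l _ [b /coef_neq0_has /hasP [t t_in /eqP t_mon]].
have [r ge_src] := tderiv_term_ge_src t_in.
by exists r => s; move: (ge_src s); rewrite t_mon ffunE.
Qed.

Lemma cplx2C (S : finType) (Z1 Z2 : S) : cplx2 Z1 Z2 = cplx2 Z2 Z1.
Proof. by apply/ffunP => s; rewrite !ffunE addnC. Qed.

Lemma reactsC (S R : finType) (src tgt : R -> cplx S)
    (C : finType) (L : C -> nat) (U : C -> nat -> S) (Z1 Z2 : S) :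
  reacts src tgt L U Z1 Z2 -> reacts src tgt L U Z2 Z1.
Proof. by case=> r [src_r tgt_r]; exists r; rewrite cplx2C. Qed.

Lemma cplx1_self (S : finType) (V : S) : (0 < cplx1 V V)%N.
Proof. by rewrite ffunE eqxx. Qed.

Lemma cplx2_self_l (S : finType) (Z1 Z2 : S) : (0 < cplx2 Z1 Z2 Z1)%N.
Proof. by rewrite ffunE eqxx. Qed.

Lemma cplx2_self_r (S : finType) (Z1 Z2 : S) : (0 < cplx2 Z1 Z2 Z2)%N.
Proof. by rewrite cplx2C cplx2_self_l. Qed.

(* Under (H1) a reaction either binds the enzyme to a substrate or has a
   single intermediate as its source. *)
Lemma H1_src_nonint_binding (S R : finType) (src tgt : R -> cplx S)
    (C : finType) (Y : C -> S) (L : C -> nat) (Sb U : C -> nat -> S)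
    (r : R) :
  H1 src tgt Y L Sb U ->
  (forall s, (0 < src r s)%N -> ~ is_intermediate L U s) ->
  exists Z1 Z2, [/\ Z1 <> Z2, src r = cplx2 Z1 Z2 &
                    reacts src tgt L U Z1 Z2].
Proof.
case=> _ [_ [reaction_in_comp [_ [_ [enzyme_ne_substrate _]]]]] src_nonint.
have [c [j [j_range r_in_comp]]] := reaction_in_comp r.
have U_int : is_intermediate L U (U c j) by exists c, j.
case: r_in_comp => [[src_r tgt_r]|[[src_r _]|[src_r _]]];
  try by case: (src_nonint (U c j)); rewrite ?src_r ?cplx1_self.
exists (Y c), (Sb c j.-1); split=> //; last by exists r; split=> //; exists (U c j).
by apply: enzyme_ne_substrate; case/andP: j_range => _; apply: leq_trans (leq_pred j).
Qed.

Lemma exists_nth_lt_pair (T : eqType) (x0 : T) (zs : seq T)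
    (P : T -> T -> Prop) (a b : T) :
  a \in zs -> b \in zs -> a != b -> P a b -> P b a ->
  exists i1 i2, (i1 < i2 < size zs)%N /\ P (nth x0 zs i1) (nth x0 zs i2).
Proof.
move=> a_in b_in a_neq_b Pab Pba.
have nth_a : nth x0 zs (index a zs) = a by rewrite nth_index.
have nth_b : nth x0 zs (index b zs) = b by rewrite nth_index.
case: (ltngtP (index a zs) (index b zs)) => [lt_ab|lt_ba|eq_ab].
- by exists (index a zs), (index b zs); rewrite lt_ab index_mem nth_a nth_b.
- by exists (index b zs), (index a zs); rewrite lt_ba index_mem nth_a nth_b.
- by move: a_neq_b; rewrite -nth_a -nth_b eq_ab eqxx.
Qed.

Theorem mainTheorem8
  (S R : finType) (src tgt : R -> cplx S)
  (C : finType) (Y : C -> S) (L : C -> nat) (Sb U : C -> nat -> S)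
  (h1 : H1 src tgt Y L Sb U) (h2 : H2 Y L Sb U)
  (X : S) (l : nat) (zs : seq S)
  (hl : (1 <= l)%N) (hm : (2 <= size zs)%N)
  (hnonint : forall z, z \in zs -> ~ is_intermediate L U z)
  (happ : appears (iter l (tderiv src tgt) (@pxvar S R X)) (mset zs)) :
  exists i1 i2, (i1 < i2 < size zs)%N /\
    reacts src tgt L U (nth X zs i1) (nth X zs i2).
Proof.
have [r src_le] := appears_iter_tderiv_ge_src hl happ.
have src_in_zs s : (0 < src r s)%N -> s \in zs.
  move=> pos; rewrite -has_pred1 has_count.
  by apply: leq_trans pos _; move: (src_le s); rewrite ffunE.
have [Z1 [Z2 [Z1_neq_Z2 src_r react]]] :=
  H1_src_nonint_binding h1 (fun s pos => hnonint s (src_in_zs s pos)).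
apply: exists_nth_lt_pair (reactsC react).
- by apply: src_in_zs; rewrite src_r cplx2_self_l.
- by apply: src_in_zs; rewrite src_r cplx2_self_r.
- exact/eqP.
- exact: react.
Qed.
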